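(* Let $(\mathfrak{h},[\,,\,],\rhd)$ be a right Post-Lie algebra. Then $(\mathcal{U}(\mathfrak{h}),\rhd)$, with its usual Hopf algebra structure and $\rhd$ the unique extension described below, is a right Post-Hopf algebra.
   Context: A right Post-Lie algebra is a Lie algebra $(\mathfrak{h},[\,,\,])$ with bilinear $\rhd$ such that $x\rhd[y,z]=a_\rhd(x,y,z)-a_\rhd(x,z,y)$ and $[x,y]\rhd z=[x\rhd z,y]+[x,y\rhd z]$, where $a_\rhd(x,y,z)=(x\rhd y)\rhd z-x\rhd(y\rhd z)$. $\mathcal{U}(\mathfrak{h})$ is the universal enveloping algebra with coproduct making elements of $\mathfrak{h}$ primitive. Known fact (used as definition of the extension): $\rhd$ extends uniquely to a bilinear map $\mathcal{U}(\mathfrak{h})\otimes\mathcal{U}(\mathfrak{h})\to\mathcal{U}(\mathfrak{h})$ such that for all $f,g,h\in\mathcal{U}(\mathfrak{h})$, $y\in\mathfrak{h}$: $\varepsilon(f\rhd g)=\varepsilon(f)\varepsilon(g)$; $\Delta(f\rhd g)=\Delta(f)\rhd\Delta(g)$; $f\rhd 1=f$; $1\rhd f=\varepsilon(f)1$; $f\rhd(gy)=(f\rhd g)\rhd y-f\rhd(g\rhd y)$; $(fg)\rhd h=(f\rhd h^{(1)})(g\rhd h^{(2)})$; $(f\rhd g)\rhd h=f\rhd\big((g\rhd h^{(1)})h^{(2)}\big)$. A right Post-Hopf algebra is a Hopf algebra $(H,\cdot,1,\Delta,\varepsilon)$ with a coalgebra morphism $\rhd:H\otimes H\to H$ such that $(x\cdot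 y)\rhd z=(x\rhd z^{(1)})\cdot(y\rhd z^{(2)})$, $(x\rhd y)\rhd z=x\rhd\big((y\rhd z^{(1)})\cdot z^{(2)}\big)$, and $\gamma_\rhd(x)(y)=y\rhd x$ is invertible in the convolution algebra $\mathrm{Hom}(H,\mathrm{End}(H))$ with product $(f\star g)(x)=f(x^{(1)})\circ g(x^{(2)})$. *)

From HB Require Import structures.
From mathcomp Require Import all_boot all_order all_algebra.
Set Implicit Arguments. Unset Strict Implicit. Unset Printing Implicit Defensive.
Import GRing.Theory.
Local Open Scope ring_scope.

Definition is_linear (K : fieldType) (U W : lmodType K) (f : U -> W) : Prop :=
  forall (a : K) (u v : U), f (a *: u + v) = a *: f u + f v.

Definition is_bilinear (K : fieldType) (U V W : lmodType K)
  (b : U -> V -> W) : Prop :=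
  (forall u, is_linear (b u)) /\ (forall v, is_linear (fun u => b u v)).

Definition is_trilinear (K : fieldType) (U V X W : lmodType K)
  (t : U -> V -> X -> W) : Prop :=
  (forall u v, is_linear (t u v)) /\ (forall u x, is_linear (fun v => t u v x))
  /\ (forall v x, is_linear (fun u => t u v x)).

Definition is_lie_bracket (K : fieldType) (h : lmodType K) (br : h -> h -> h) :=
  is_bilinear br /\ (forall x, br x x = 0) /\
  (forall x y z, br x (br y z) + br y (br z x) + br z (br x y) = 0).

Definition assoc_rpl (K : fieldType) (h : lmodType K) (tr : h -> h -> h)
  (x y z : h) : h := tr (tr x y) z - tr x (tr y z).

Definition is_right_post_lie (K : fieldType) (h : lmodType K)
  (br tr : h -> h -> h) : Prop :=
  is_lie_bracket br /\ is_bilinear tr /\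
  (forall x y z, tr x (br y z) = assoc_rpl tr x y z - assoc_rpl tr x z y) /\
  (forall x y z, tr (br x y) z = br (tr x z) y + br x (tr y z)).

Definition is_alg_morph (K : fieldType) (A B : algType K) (F : A -> B) :=
  is_linear F /\ F 1 = 1 /\ (forall a b, F (a * b) = F a * F b).

Definition is_UEA (K : fieldType) (h : lmodType K) (br : h -> h -> h)
  (U : algType K) (iota : h -> U) : Prop :=
  is_linear iota /\
  (forall x y, iota (br x y) = iota x * iota y - iota y * iota x) /\
  (forall (A : algType K) (f : h -> A), is_linear f ->
     (forall x y, f (br x y) = f x * f y - f y * f x) ->
     (exists F : U -> A, is_alg_morph F /\ forall x, F (iota x) = f x) /\
     (forall F G : U -> A, is_alg_morph F -> is_alg_morph G ->
        (forall x, F (iota x) = f x) -> (forall x, G (iota x) = f x) ->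
        forall u, F u = G u)).

(* Coproducts in "Church-encoded Sweedler notation".                         *)
(* An element w of U (x) U is represented through the maps it induces:       *)
(* for every K-module W and bilinear  beta : U -> U -> W,                    *)
(* cop W beta x  stands for  (beta-bar)(Delta x) = sum beta(x(1), x(2)),     *)
(* where beta-bar : U (x) U -> W is the linear map induced by beta.          *)
Definition copT (K : fieldType) (U : lmodType K) :=
  forall W : lmodType K, (U -> U -> W) -> U -> W.

(* Structural requirements making cop a bona fide U(x)U-valued linear map.  *)
Definition cop_wf (K : fieldType) (U : lmodType K) (cop : copT U) : Prop :=
  (forall (W : lmodType K) (beta : U -> U -> W), is_bilinear beta ->
     is_linear (cop W beta)) /\
  (forall (W : lmodType K) (b1 b2 : U -> U -> W) (k : K) (x : U),
     is_bilinear b1 -> is_bilinear b2 ->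
     cop W (fun u v => k *: b1 u v + b2 u v) x = k *: cop W b1 x + cop W b2 x) /\
  (forall (W W' : lmodType K) (phi : W -> W') (beta : U -> U -> W) (x : U),
     is_linear phi -> is_bilinear beta ->
     phi (cop W beta x) = cop W' (fun u v => phi (beta u v)) x).

Definition cop_alg_morph (K : fieldType) (U : algType K) (cop : copT U) :=
  (forall (W : lmodType K) (beta : U -> U -> W), is_bilinear beta ->
     cop W beta 1 = beta 1 1) /\
  (forall (W : lmodType K) (beta : U -> U -> W) (x y : U), is_bilinear beta ->
     cop W beta (x * y) =
     cop W (fun x1 x2 => cop W (fun y1 y2 => beta (x1 * y1) (x2 * y2)) y) x).

Definition is_hopf (K : fieldType) (H : algType K) (cop : copT H)
  (eps : H -> K) : Prop :=
  cop_wf cop /\ cop_alg_morph cop /\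
  is_linear (eps : H -> K^o) /\ eps 1 = 1 /\
  (forall x y, eps (x * y) = eps x * eps y) /\
  (forall (W : lmodType K) (t : H -> H -> H -> W) (x : H), is_trilinear t ->
     cop W (fun a b => cop W (fun c d => t c d b) a) x =
     cop W (fun a b => cop W (fun c d => t a c d) b) x) /\
  (forall x, cop H (fun a b => eps a *: b) x = x) /\
  (forall x, cop H (fun a b => eps b *: a) x = x) /\
  (exists S : H -> H, is_linear S /\
     forall x, cop H (fun a b => S a * b) x = eps x *: 1 /\
               cop H (fun a b => a * S b) x = eps x *: 1).

Definition is_right_post_hopf (K : fieldType) (H : algType K) (cop : copT H)
  (eps : H -> K) (tr : H -> H -> H) : Prop :=
  is_hopf cop eps /\
  is_bilinear tr /\
  (forall x y, eps (tr x y) = eps x * eps y) /\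
  (forall (W : lmodType K) (beta : H -> H -> W) (x y : H), is_bilinear beta ->
     cop W beta (tr x y) =
     cop W (fun x1 x2 => cop W (fun y1 y2 => beta (tr x1 y1) (tr x2 y2)) y) x) /\
  (forall x y z, tr (x * y) z = cop H (fun z1 z2 => tr x z1 * tr y z2) z) /\
  (forall x y z, tr (tr x y) z = tr x (cop H (fun z1 z2 => tr y z1 * z2) z)) /\
  (* gamma(x) = (y |-> y |> x) is convolution-invertible in Hom(H, End H):  *)
  (* there is a linear delta : H -> End(H) with gamma * delta = delta * gamma *)
  (* = unit, where (f * g)(x) = f(x(1)) o g(x(2)) and unit(x) = eps(x) id.   *)
  (exists delta : H -> H -> H, is_bilinear delta /\
     forall x y, cop H (fun x1 x2 => tr (delta x2 y) x1) x = eps x *: y /\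
                 cop H (fun x1 x2 => delta x1 (tr y x2)) x = eps x *: y).

Definition is_UEA_extension (K : fieldType) (h : lmodType K)
  (trh : h -> h -> h) (U : algType K) (iota : h -> U) (cop : copT U)
  (eps : U -> K) (tr : U -> U -> U) : Prop :=
  is_bilinear tr /\
  (forall x y, tr (iota x) (iota y) = iota (trh x y)) /\
  (forall f g, eps (tr f g) = eps f * eps g) /\
  (forall (W : lmodType K) (beta : U -> U -> W) (f g : U), is_bilinear beta ->
     cop W beta (tr f g) =
     cop W (fun f1 f2 => cop W (fun g1 g2 => beta (tr f1 g1) (tr f2 g2)) g) f) /\
  (forall f, tr f 1 = f) /\
  (forall f, tr 1 f = eps f *: 1) /\
  (forall f g y, tr f (g * iota y) = tr (tr f g) (iota y) - tr f (tr g (iota y))) /\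
  (forall f g k, tr (f * g) k = cop U (fun k1 k2 => tr f k1 * tr g k2) k) /\
  (forall f g k, tr (tr f g) k = tr f (cop U (fun k1 k2 => tr g k1 * k2) k)).

(* Apart from the Hopf axioms and the convolution invertibility of
   gamma(x) = (y |-> y |> x), every post-Hopf axiom is one of the defining
   properties of the extension.  Both remaining facts rest on the filtration
   U_0 <= U_1 <= ... of U(h) by word length in the generators, which exhausts
   U(h) by the universal property.  The coassociativity and counit laws hold
   at 1, are linear, and pass from u to u * iota(y) because iota(y) is
   primitive.  For invertibility write gamma = eps - nu; then nu vanishes on
   U_0 = K 1, and since right multiplication by a primitive element acts on
   convolution products by the Leibniz rule, nu^{*n} vanishes on U_{n-1}.
   So the geometric series sum_n nu^{*n} is finite on each U_k and is a
   two-sided convolution inverse of gamma.  The antipode is the same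
   construction applied to left multiplication. *)

From HB Require Import structures.
From mathcomp Require Import all_boot all_order all_algebra.
From Stdlib Require Import ClassicalEpsilon FunctionalExtensionality.
From mathcomp Require Import zify.
Set Implicit Arguments. Unset Strict Implicit. Unset Printing Implicit Defensive.
Import GRing.Theory.
Local Open Scope ring_scope.

Section LinearMaps.
Variables (K : fieldType) (V W X : lmodType K).
Implicit Types (f g : V -> W).

Lemma is_linear0 f : is_linear f -> f 0 = 0.
Proof. by move=> Hf; have := Hf (-1) 0 0; rewrite scaler0 addr0 scaleN1r addNr. Qed.

Lemma is_linearD f : is_linear f -> forall u v, f (u + v) = f u + f v.
Proof. by move=> Hf u v; rewrite -[u]scale1r Hf !scale1r. Qed.

Lemma is_linearZ f : is_linear f -> forall a u, f (a *: u) = a *: f u.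
Proof. by move=> Hf a u; rewrite -[a *: u]addr0 Hf is_linear0 // addr0. Qed.

Lemma is_linearB f : is_linear f -> forall u v, f (u - v) = f u - f v.
Proof. by move=> Hf u v; rewrite -scaleN1r addrC Hf scaleN1r addrC. Qed.

Lemma is_linear_id : is_linear (@id V).
Proof. by []. Qed.

Lemma is_linear_add f g : is_linear f -> is_linear g -> is_linear (fun u => f u + g u).
Proof. by move=> Hf Hg a u v; rewrite Hf Hg scalerDr addrACA. Qed.

Lemma is_linear_sub f g : is_linear f -> is_linear g -> is_linear (fun u => f u - g u).
Proof. by move=> Hf Hg a u v; rewrite Hf Hg scalerBr opprD addrACA. Qed.

Lemma is_linear_comp (f : W -> X) g :
  is_linear f -> is_linear g -> is_linear (fun u => f (g u)).
Proof. by move=> Hf Hg a u v; rewrite Hg Hf. Qed.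

Lemma is_linear_scalel (e : V -> K^o) (w : W) : is_linear e -> is_linear (fun u => e u *: w).
Proof. by move=> He a u v; rewrite He scalerDl scalerA. Qed.

End LinearMaps.

Section BilinearMaps.
Variables (K : fieldType) (V W X : lmodType K).

Lemma is_bilinear0 : is_bilinear (fun (_ : V) (_ : W) => 0 : X).
Proof. by split=> _ a u v; rewrite scaler0 addr0. Qed.

Lemma is_bilinear_add (b1 b2 : V -> W -> X) :
  is_bilinear b1 -> is_bilinear b2 -> is_bilinear (fun u v => b1 u v + b2 u v).
Proof. by case=> ? ? [? ?]; split=> u; apply: is_linear_add. Qed.

Lemma is_bilinear_sub (b1 b2 : V -> W -> X) :
  is_bilinear b1 -> is_bilinear b2 -> is_bilinear (fun u v => b1 u v - b2 u v).
Proof. by case=> ? ? [? ?]; split=> u; apply: is_linear_sub. Qed.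

Lemma is_bilinear_scalel (e : V -> K^o) :
  is_linear e -> is_bilinear (fun u (w : W) => e u *: w).
Proof.
move=> He; split=> u; last exact: is_linear_scalel.
by move=> a v w; rewrite scalerDr scalerA mulrC -scalerA.
Qed.

Lemma is_bilinear_swap (b : V -> W -> X) : is_bilinear b -> is_bilinear (fun w v => b v w).
Proof. by case=> ? ?; split. Qed.

End BilinearMaps.

Section TrilinearMaps.
Variables (K : fieldType) (V1 V2 V3 X1 X2 X3 W : lmodType K).
Implicit Type t : V1 -> V2 -> V3 -> W.

Lemma is_trilinear_fix1 t a : is_trilinear t -> is_bilinear (t a).
Proof. by case=> T1 [T2 _]; split=> u; [apply: T1 | apply: T2]. Qed.

Lemma is_trilinear_fix3 t e : is_trilinear t -> is_bilinear (fun c d => t c d e).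
Proof. by case=> _ [T2 T3]; split=> u; [apply: T2 | apply: T3]. Qed.

Lemma is_trilinear_add t1 t2 : is_trilinear t1 -> is_trilinear t2 ->
  is_trilinear (fun c d e => t1 c d e + t2 c d e).
Proof. by case=> ? [? ?] [? [? ?]]; split; [|split] => *; apply: is_linear_add. Qed.

Lemma is_trilinear_comp t (p1 : X1 -> V1) (p2 : X2 -> V2) (p3 : X3 -> V3) :
  is_trilinear t -> is_linear p1 -> is_linear p2 -> is_linear p3 ->
  is_trilinear (fun c d e => t (p1 c) (p2 d) (p3 e)).
Proof.
case=> T1 [T2 T3] P1 P2 P3; split; [|split] => u v.
- exact: is_linear_comp (T1 _ _) P3.
- exact: is_linear_comp (T2 _ _) P2.
- exact: is_linear_comp (T3 _ _) P1.
Qed.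

End TrilinearMaps.

Section AlgebraMaps.
Variables (K : fieldType) (A : algType K).

Lemma is_linear_mulr (c : A) : is_linear (fun u : A => u * c).
Proof. by move=> a u v; rewrite mulrDl scalerAl. Qed.

Lemma is_linear_mull (c : A) : is_linear (fun u : A => c * u).
Proof. by move=> a u v; rewrite mulrDr scalerAr. Qed.

Lemma is_bilinear_mul : is_bilinear (fun u v : A => u * v).
Proof. by split=> u; [exact: is_linear_mull | exact: is_linear_mulr]. Qed.

End AlgebraMaps.

Section SubalgebraInduction.
Variables (K : fieldType) (U : algType K) (P : U -> Prop).
Hypotheses (P1 : P 1) (PZD : forall a u v, P u -> P v -> P (a *: u + v))
  (PM : forall u v, P u -> P v -> P (u * v)).

Definition predP : {pred U} :=
  fun u => if excluded_middle_informative (P u) then true else false.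

Lemma predPP u : reflect (P u) (u \in predP).
Proof. by rewrite /in_mem /= /predP; case: excluded_middle_informative => ?; constructor. Qed.

Lemma predP_subalg_closed : subalg_closed predP.
Proof.
split; first exact/predPP.
- by move=> a u v /predPP Pu /predPP Pv; apply/predPP; apply: PZD.
- by move=> u v /predPP Pu /predPP Pv; apply/predPP; apply: PM.
Qed.

HB.instance Definition _ := GRing.isSubalgClosed.Build K U predP predP_subalg_closed.
Record subalg_of := SubalgOf { subalg_val : U; _ : subalg_val \in predP }.
HB.instance Definition _ := [isSub for subalg_val].
HB.instance Definition _ := [Choice of subalg_of by <:].
HB.instance Definition _ := [SubChoice_isSubAlgebra of subalg_of by <:].

(* The subalgebra cut out by [P] contains the generators, so the universal
   property yields a retraction of [U] onto it. *)
Lemma UEA_ind (h : lmodType K) (br : h -> h -> h) (iota : h -> U) :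
  is_UEA br iota -> (forall x, P (iota x)) -> forall u, P u.
Proof.
case=> iotaL [iotaB univ] Pi.
have iota_in x : iota x \in predP by apply/predPP.
pose f x := SubalgOf (iota_in x).
have fL : is_linear f by move=> a x y; apply: val_inj; rewrite /= iotaL.
have fB x y : f (br x y) = f x * f y - f y * f x by apply: val_inj; rewrite /= iotaB.
have [[F [[FL [F1 FM]] Fi]] _] := univ _ f fL fB.
have [_ iota_uniq] := univ U iota iotaL iotaB.
have valFK u : subalg_val (F u) = u.
  apply: (iota_uniq (subalg_val \o F) id) => //= [|x]; last by rewrite Fi.
  split; first by move=> a v w /=; rewrite FL.
  by split; [rewrite /= F1 | move=> v w /=; rewrite FM].
by move=> u; rewrite -(valFK u); apply/predPP; case: (F u).
Qed.

End SubalgebraInduction.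

Section EnvelopingBialgebra.
Variables (K : fieldType) (h : lmodType K) (br : h -> h -> h)
  (U : algType K) (iota : h -> U) (cop : copT U) (eps : U -> K).
(* [copT U] unfolds to a product, which would make the module argument of
   [cop] implicit. *)
Arguments cop : clear implicits.
Hypotheses (HU : is_UEA br iota) (Hwf : cop_wf cop) (Hmorph : cop_alg_morph cop)
  (cop_iota : forall (W : lmodType K) (beta : U -> U -> W) (x : h), is_bilinear beta ->
     cop W beta (iota x) = beta (iota x) 1 + beta 1 (iota x))
  (epsL : is_linear (eps : U -> K^o)) (eps1 : eps 1 = 1)
  (epsM : forall u v, eps (u * v) = eps u * eps v) (eps_iota : forall x, eps (iota x) = 0).

Lemma UEA_rect (P : U -> Prop) : P 1 -> (forall a u v, P u -> P v -> P (a *: u + v)) ->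
  (forall u y, P u -> P (u * iota y)) -> forall u, P u.
Proof.
move=> P1 PZD Pi.
have PM v : forall u, P u -> P (u * v).
  apply: (UEA_ind (P := fun v => forall u, P u -> P (u * v)) _ _ _ HU) => {v}.
  - by move=> u; rewrite mulr1.
  - move=> a v w Pv Pw u Pu; rewrite mulrDr -scalerAr.
    by apply: PZD; [apply: Pv | apply: Pw].
  - by move=> v w Pv Pw u Pu; rewrite mulrA; apply/Pw/Pv.
  - by move=> x u Pu; apply: Pi.
by move=> u; rewrite -[u]mul1r; apply: PM.
Qed.

Section Coproduct.
Variable W : lmodType K.
Implicit Types beta : U -> U -> W.

Lemma cop_linear beta : is_bilinear beta -> is_linear (cop W beta).
Proof. by case: Hwf => H _; apply: H. Qed.

Lemma eq_cop b1 b2 x : (forall u v, b1 u v = b2 u v) -> cop W b1 x = cop W b2 x.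
Proof.
move=> E; congr cop.
by apply: functional_extensionality => u; apply: functional_extensionality.
Qed.

Lemma copZD b1 b2 k x : is_bilinear b1 -> is_bilinear b2 ->
  cop W (fun u v => k *: b1 u v + b2 u v) x = k *: cop W b1 x + cop W b2 x.
Proof. by case: Hwf => _ [H _]; apply: H. Qed.

Lemma copD b1 b2 x : is_bilinear b1 -> is_bilinear b2 ->
  cop W (fun u v => b1 u v + b2 u v) x = cop W b1 x + cop W b2 x.
Proof.
move=> B1 B2; rewrite -[cop W b1 x]scale1r -copZD //.
by apply: eq_cop => u v; rewrite scale1r.
Qed.

Lemma copB b1 b2 x : is_bilinear b1 -> is_bilinear b2 ->
  cop W (fun u v => b1 u v - b2 u v) x = cop W b1 x - cop W b2 x.
Proof.
move=> B1 B2; rewrite addrC -scaleN1r -copZD //.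
by apply: eq_cop => u v; rewrite scaleN1r addrC.
Qed.

Lemma cop0 x : cop W (fun _ _ => 0) x = 0.
Proof.
have B0 := is_bilinear0 U U W.
transitivity (cop W (fun u v => -1 *: (0 : W) + 0) x).
  by apply: eq_cop => u v; rewrite scaler0 addr0.
by rewrite copZD // scaleN1r addNr.
Qed.

Lemma cop1 beta : is_bilinear beta -> cop W beta 1 = beta 1 1.
Proof. by case: Hmorph => H _; apply: H. Qed.

Lemma cop_mul_iota beta u y : is_bilinear beta ->
  cop W beta (u * iota y) = cop W (fun a b => beta (a * iota y) b + beta a (b * iota y)) u.
Proof.
move=> B; case: Hmorph => _ -> //; apply: eq_cop => a b.
rewrite cop_iota ?mulr1 //.
case: B => B1 B2; split=> c.
- exact: is_linear_comp (B1 _) (is_linear_mull _).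
- exact: is_linear_comp (B2 _) (is_linear_mull _).
Qed.

End Coproduct.

Lemma linear_cop (W W' : lmodType K) (phi : W -> W') (beta : U -> U -> W) x :
  is_linear phi -> is_bilinear beta ->
  phi (cop W beta x) = cop W' (fun u v => phi (beta u v)) x.
Proof. by case: Hwf => _ [_ H]; apply: H. Qed.

Lemma counit_l x : cop U (fun a b => eps a *: b) x = x.
Proof.
have Be := is_bilinear_scalel U epsL.
elim/UEA_rect: x => [|a u v IHu IHv|u y IH].
- by rewrite cop1 // eps1 scale1r.
- by rewrite (cop_linear Be) IHu IHv.
- rewrite cop_mul_iota // -[in RHS]IH (linear_cop _ (is_linear_mulr _)) //.
  by apply: eq_cop => a b; rewrite epsM eps_iota mulr0 scale0r add0r scalerAl.
Qed.

Lemma counit_r x : cop U (fun a b => eps b *: a) x = x.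
Proof.
have Be := is_bilinear_swap (is_bilinear_scalel U epsL).
elim/UEA_rect: x => [|a u v IHu IHv|u y IH].
- by rewrite cop1 // eps1 scale1r.
- by rewrite (cop_linear Be) IHu IHv.
- rewrite cop_mul_iota // -[in RHS]IH (linear_cop _ (is_linear_mulr _)) //.
  by apply: eq_cop => a b; rewrite epsM eps_iota mulr0 scale0r addr0 scalerAl.
Qed.

Section Coassociativity.
Variable W : lmodType K.
Implicit Type t : U -> U -> U -> W.

Definition cop2l t x := cop W (fun a b => cop W (fun c d => t c d b) a) x.
Definition cop2r t x := cop W (fun a b => cop W (fun c d => t a c d) b) x.
Definition tri_mul_iota t y c d e :=
  t (c * iota y) d e + t c (d * iota y) e + t c d (e * iota y).

Lemma is_trilinear_mul_iota t y : is_trilinear t -> is_trilinear (tri_mul_iota t y).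
Proof.
move=> T; have Li := is_linear_mulr (iota y); have Lid := @is_linear_id _ U.
apply: is_trilinear_add; first apply: is_trilinear_add.
- exact: (is_trilinear_comp T Li Lid Lid).
- exact: (is_trilinear_comp T Lid Li Lid).
- exact: (is_trilinear_comp T Lid Lid Li).
Qed.

Lemma is_bilinear_cop2l t : is_trilinear t ->
  is_bilinear (fun a b => cop W (fun c d => t c d b) a).
Proof.
move=> T; have Bb e := is_trilinear_fix3 e T.
split=> [a k b b'|b]; last exact: cop_linear.
by rewrite -copZD //; apply: eq_cop => c d; case: T => T1 _; apply: T1.
Qed.

Lemma is_bilinear_cop2r t : is_trilinear t ->
  is_bilinear (fun a b => cop W (fun c d => t a c d) b).
Proof.
move=> T; have Ba c := is_trilinear_fix1 c T.
split=> [a|b k a a']; first exact: cop_linear.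
by rewrite -copZD //; apply: eq_cop => c d; case: T => _ [_ T3]; apply: T3.
Qed.

Lemma cop2l_mul_iota t x y : is_trilinear t ->
  cop2l t (x * iota y) = cop2l (tri_mul_iota t y) x.
Proof.
move=> T; have Li := is_linear_mulr (iota y); have Lid := @is_linear_id _ U.
rewrite /cop2l cop_mul_iota; last exact: is_bilinear_cop2l.
apply: eq_cop => a b; rewrite cop_mul_iota -?copD //.
- exact: (is_trilinear_fix3 b
    (is_trilinear_add (is_trilinear_comp T Li Lid Lid) (is_trilinear_comp T Lid Li Lid))).
- exact: (is_trilinear_fix3 _ T).
- exact: (is_trilinear_fix3 _ T).
Qed.

Lemma cop2r_mul_iota t x y : is_trilinear t ->
  cop2r t (x * iota y) = cop2r (tri_mul_iota t y) x.
Proof.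
move=> T; have Li := is_linear_mulr (iota y); have Lid := @is_linear_id _ U.
rewrite /cop2r cop_mul_iota; last exact: is_bilinear_cop2r.
apply: eq_cop => a b; rewrite cop_mul_iota; last exact: is_trilinear_fix1.
rewrite -copD; first by apply: eq_cop => c d; rewrite addrA.
- exact: (is_trilinear_fix1 _ (is_trilinear_comp T Li Lid Lid)).
- exact: (is_trilinear_fix1 a
    (is_trilinear_add (is_trilinear_comp T Lid Li Lid) (is_trilinear_comp T Lid Lid Li))).
Qed.

Lemma coassoc x : forall t, is_trilinear t -> cop2l t x = cop2r t x.
Proof.
elim/UEA_rect: x => [|k u v IHu IHv|u y IH] t T.
- rewrite /cop2l /cop2r !cop1 //; [exact: is_trilinear_fix1 | exact: is_bilinear_cop2r |
    exact: is_trilinear_fix3 | exact: is_bilinear_cop2l].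
- rewrite /cop2l /cop2r (cop_linear (is_bilinear_cop2l T)) (cop_linear (is_bilinear_cop2r T)).
  by have := IHu t T; have := IHv t T; rewrite /cop2l /cop2r => -> ->.
- by rewrite cop2l_mul_iota // cop2r_mul_iota // IH //; apply: is_trilinear_mul_iota.
Qed.

End Coassociativity.

Implicit Types (f g : U -> U -> U).

(* A map [U -> End U] is curried as [U -> U -> U], and [conv] is the
   convolution product (f * g)(x) = f(x(1)) o g(x(2)). *)
Definition conv f g x z := cop U (fun a b => f a (g b z)) x.
Definition cunit (x z : U) : U := eps x *: z.

Lemma is_bilinear_cunit : is_bilinear cunit.
Proof. exact: is_bilinear_scalel epsL. Qed.

Lemma is_bilinear_conv_integrand f g z : is_bilinear f -> is_bilinear g ->
  is_bilinear (fun a b => f a (g b z)).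
Proof.
case=> F1 F2 [_ G2]; split=> a; last exact: F2.
exact: is_linear_comp (F1 a) (G2 z).
Qed.

Lemma is_bilinear_conv f g : is_bilinear f -> is_bilinear g -> is_bilinear (conv f g).
Proof.
move=> F G; split=> [x k z z'|z]; last first.
  exact: cop_linear (is_bilinear_conv_integrand z F G).
rewrite /conv -copZD; try exact: (is_bilinear_conv_integrand _ F G).
by apply: eq_cop => a b; case: F => F1 _; case: G => G1 _; rewrite G1 F1.
Qed.

Lemma eq_conv f f' g g' x z :
  (forall a b, f a b = f' a b) -> (forall a b, g a b = g' a b) ->
  conv f g x z = conv f' g' x z.
Proof. by move=> Ef Eg; apply: eq_cop => a b; rewrite Ef Eg. Qed.

Lemma convA f g k x z : is_bilinear f -> is_bilinear g -> is_bilinear k ->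
  conv (conv f g) k x z = conv f (conv g k) x z.
Proof.
move=> [F1 F2] [G1 G2] [K1 K2].
have T : is_trilinear (fun c d e => f c (g d (k e z))).
  split; [|split] => *; last exact: F2.
  - exact: is_linear_comp (F1 _) (is_linear_comp (G1 _) (K2 _)).
  - exact: is_linear_comp (F1 _) (G2 _).
rewrite /conv; have := coassoc x T; rewrite /cop2l /cop2r => ->.
apply: eq_cop => a b; rewrite (linear_cop _ (F1 a)) //.
exact: is_bilinear_conv_integrand (conj G1 G2) (conj K1 K2).
Qed.

Lemma conv_cunitl f x z : is_bilinear f -> conv cunit f x z = f x z.
Proof.
case=> _ F2; rewrite -[in RHS](counit_l x) (linear_cop _ (F2 z)); last first.
  exact: is_bilinear_cunit.
by apply: eq_cop => a b; rewrite /cunit (is_linearZ (F2 z)).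
Qed.

Lemma conv_cunitr f x z : is_bilinear f -> conv f cunit x z = f x z.
Proof.
case=> F1 F2; rewrite -[in RHS](counit_r x) (linear_cop _ (F2 z)); last first.
  exact: is_bilinear_swap is_bilinear_cunit.
by apply: eq_cop => a b; rewrite /cunit (is_linearZ (F1 a)) (is_linearZ (F2 z)).
Qed.

Lemma convDl f1 f2 g x z : is_bilinear f1 -> is_bilinear f2 -> is_bilinear g ->
  conv (fun x z => f1 x z + f2 x z) g x z = conv f1 g x z + conv f2 g x z.
Proof.
move=> F1 F2 G; rewrite /conv copD //.
- exact: (is_bilinear_conv_integrand _ F1 G).
- exact: (is_bilinear_conv_integrand _ F2 G). Qed.

Lemma convBl f1 f2 g x z : is_bilinear f1 -> is_bilinear f2 -> is_bilinear g ->
  conv (fun x z => f1 x z - f2 x z) g x z = conv f1 g x z - conv f2 g x z.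
Proof.
move=> F1 F2 G; rewrite /conv copB //.
- exact: (is_bilinear_conv_integrand _ F1 G).
- exact: (is_bilinear_conv_integrand _ F2 G). Qed.

Lemma convDr f g1 g2 x z : is_bilinear f -> is_bilinear g1 -> is_bilinear g2 ->
  conv f (fun x z => g1 x z + g2 x z) x z = conv f g1 x z + conv f g2 x z.
Proof.
move=> F G1 G2; rewrite /conv -copD; last 2 first.
- exact: (is_bilinear_conv_integrand _ F G1).
- exact: (is_bilinear_conv_integrand _ F G2).
by apply: eq_cop => a b; case: F => F1 _; rewrite (is_linearD (F1 a)).
Qed.

Lemma convBr f g1 g2 x z : is_bilinear f -> is_bilinear g1 -> is_bilinear g2 ->
  conv f (fun x z => g1 x z - g2 x z) x z = conv f g1 x z - conv f g2 x z.
Proof.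
move=> F G1 G2; rewrite /conv -copB; last 2 first.
- exact: (is_bilinear_conv_integrand _ F G1).
- exact: (is_bilinear_conv_integrand _ F G2).
by apply: eq_cop => a b; case: F => F1 _; rewrite (is_linearB (F1 a)).
Qed.

Inductive filt : nat -> U -> Prop :=
| filt1 : filt 0 1
| filtZD k a u v : filt k u -> filt k v -> filt k (a *: u + v)
| filtS k u : filt k u -> filt k.+1 u
| filt_mul_iota k u y : filt k u -> filt k.+1 (u * iota y).

Lemma filt_le m n u : filt m u -> (m <= n)%N -> filt n u.
Proof.
move=> Hu /subnKC <-; elim: (n - m)%N => [|d IH]; first by rewrite addn0.
by rewrite addnS; apply: filtS.
Qed.

Lemma filt_exists u : exists k, filt k u.
Proof.
elim/UEA_rect: u => [|a u v [m Hu] [n Hv]|u y [k Hu]].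
- by exists 0%N; apply: filt1.
- by exists (maxn m n); apply: filtZD; apply: filt_le; [exact: Hu | lia | exact: Hv | lia].
- by exists k.+1; apply: filt_mul_iota.
Qed.

Definition filt_deg u : nat :=
  proj1_sig (constructive_indefinite_description _ (filt_exists u)).

Lemma filt_degP u : filt (filt_deg u) u.
Proof. by rewrite /filt_deg; case: constructive_indefinite_description. Qed.

Definition vanishes_below n f := forall k u, filt k u -> (k < n)%N -> forall z, f u z = 0.

Definition precomp_iota y f a z := f (a * iota y) z.

Lemma is_bilinear_precomp_iota y f : is_bilinear f -> is_bilinear (precomp_iota y f).
Proof.
case=> F1 F2; split=> a; first exact: F1.
exact: is_linear_comp (F2 _) (is_linear_mulr _).
Qed.

Lemma vanishes_below_precomp_iota y n f :
  vanishes_below n f -> vanishes_below n.-1 (precomp_iota y f).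
Proof. by move=> Vf k u Hu Hk z; apply: (Vf k.+1); [exact: filt_mul_iota | lia]. Qed.

Lemma conv_mul_iota f g u y z : is_bilinear f -> is_bilinear g ->
  conv f g (u * iota y) z = conv (precomp_iota y f) g u z + conv f (precomp_iota y g) u z.
Proof.
move=> F G; rewrite /conv cop_mul_iota; last exact: (is_bilinear_conv_integrand _ F G).
rewrite copD //.
- exact: (is_bilinear_conv_integrand _ (is_bilinear_precomp_iota y F) G).
- exact: (is_bilinear_conv_integrand _ F (is_bilinear_precomp_iota y G)).
Qed.

Lemma vanishes_below_conv m n f g : is_bilinear f -> is_bilinear g ->
  vanishes_below m f -> vanishes_below n g -> vanishes_below (m + n) (conv f g).
Proof.
move=> F G Vf Vg k u Hu; elim: Hu m n f g F G Vf Vg => {k u}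
  [|k c u v _ IHu _ IHv|k u _ IH|k u y _ IH] m n f g F G Vf Vg Hk z.
- rewrite /conv cop1; last exact: (is_bilinear_conv_integrand _ F G).
  case: m Vf Hk => [|m] Vf Hk; last exact: (Vf 0%N 1 filt1).
  by rewrite (Vg 0%N 1 filt1 Hk z); case: F => F1 _; rewrite is_linear0.
- rewrite /conv (cop_linear (is_bilinear_conv_integrand _ F G)).
  by rewrite -!/(conv f g _ _) (IHu m n) // (IHv m n) // scaler0 addr0.
- by apply: (IH m n) => //; lia.
- rewrite conv_mul_iota // (IH m.-1 n) ?(IH m n.-1) ?addr0 //;
    solve [exact: is_bilinear_precomp_iota | exact: vanishes_below_precomp_iota | lia].
Qed.

Definition is_lmul f := forall x w, f x w = f x 1 * w.

Lemma is_lmul_conv f g : is_bilinear f -> is_bilinear g -> is_lmul f -> is_lmul g ->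
  is_lmul (conv f g).
Proof.
move=> F G Lf Lg x w; rewrite /conv (linear_cop _ (is_linear_mulr w)); last first.
  exact: (is_bilinear_conv_integrand 1 F G).
by apply: eq_cop => a b; rewrite Lf Lg mulrA -Lf.
Qed.

Section ConvolutionInverse.
Variable gam : U -> U -> U.
Hypotheses (Gb : is_bilinear gam) (gam1 : forall z, gam 1 z = z).

Definition nu x z := cunit x z - gam x z.

Fixpoint nu_pow n : U -> U -> U := if n is n'.+1 then conv nu (nu_pow n') else cunit.

Fixpoint geom n : U -> U -> U :=
  if n is n'.+1 then fun x z => geom n' x z + nu_pow n' x z else fun _ _ => 0.

Definition conv_inv x z := geom (filt_deg x).+1 x z.

Lemma is_bilinear_nu : is_bilinear nu.
Proof. exact: is_bilinear_sub is_bilinear_cunit Gb. Qed.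

Lemma is_bilinear_nu_pow n : is_bilinear (nu_pow n).
Proof.
elim: n => [|n IH] /=; first exact: is_bilinear_cunit.
exact: is_bilinear_conv is_bilinear_nu IH.
Qed.

Lemma is_bilinear_geom n : is_bilinear (geom n).
Proof.
elim: n => [|n IH] /=; first exact: is_bilinear0.
exact: is_bilinear_add IH (is_bilinear_nu_pow n).
Qed.

Lemma nu_vanishes : vanishes_below 1 nu.
Proof.
move=> k u; elim=> {k u} [|k a u v _ IHu _ IHv|//|//] Hk z.
- by rewrite /nu /cunit gam1 eps1 scale1r subrr.
- by case: is_bilinear_nu => _ L; rewrite (L z) IHu // IHv // scaler0 addr0.
Qed.

Lemma nu_pow_vanishes n : vanishes_below n (nu_pow n).
Proof.
elim: n => [//|n IH] /=.
exact: vanishes_below_conv is_bilinear_nu (is_bilinear_nu_pow n) nu_vanishes IH.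
Qed.

Lemma conv_nu_pow_nu n x z : conv (nu_pow n) nu x z = nu_pow n.+1 x z.
Proof.
elim: n x z => [|n IH] x z /=.
  by rewrite conv_cunitl ?conv_cunitr //; exact: is_bilinear_nu.
rewrite convA; [|exact: is_bilinear_nu|exact: is_bilinear_nu_pow|exact: is_bilinear_nu].
exact: eq_conv.
Qed.

Lemma conv_gam_geom n x z : conv gam (geom n) x z = cunit x z - nu_pow n x z.
Proof.
elim: n x z => [|n IH] x z /=.
  rewrite subrr -[RHS](cop0 _ x); apply: eq_cop => a b.
  by case: Gb => G1 _; rewrite is_linear0.
rewrite convDr //; [|exact: is_bilinear_geom|exact: is_bilinear_nu_pow].
rewrite IH (@eq_conv _ (fun x z => cunit x z - nu x z) _ (nu_pow n)) //; last first.
  by move=> a b; rewrite /nu opprB addrC subrK.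
rewrite convBl; [|exact: is_bilinear_cunit|exact: is_bilinear_nu|exact: is_bilinear_nu_pow].
by rewrite conv_cunitl ?addrA ?subrK //; exact: is_bilinear_nu_pow.
Qed.

Lemma conv_geom_gam n x z : conv (geom n) gam x z = cunit x z - nu_pow n x z.
Proof.
elim: n x z => [|n IH] x z /=; first by rewrite subrr /conv cop0.
rewrite convDl //; [|exact: is_bilinear_geom|exact: is_bilinear_nu_pow].
rewrite IH (@eq_conv _ (nu_pow n) _ (fun x z => cunit x z - nu x z)) //; last first.
  by move=> a b; rewrite /nu opprB addrC subrK.
rewrite convBr; [|exact: is_bilinear_nu_pow|exact: is_bilinear_cunit|exact: is_bilinear_nu].
by rewrite conv_cunitr ?conv_nu_pow_nu ?addrA ?subrK //; exact: is_bilinear_nu_pow.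
Qed.

Lemma geom_stable k x n z : filt k x -> (k < n)%N -> geom n x z = geom k.+1 x z.
Proof.
move=> Hx; elim: n => [//|n IH] /= Hn.
case: (ltnP k n) => Hkn; first by rewrite IH // (nu_pow_vanishes Hx Hkn) addr0.
by have -> : n = k by lia.
Qed.

Lemma conv_invE k x n z : filt k x -> (k < n)%N -> conv_inv x z = geom n x z.
Proof.
move=> Hx Hn; rewrite /conv_inv.
have Hd := filt_degP x; pose N := (maxn (filt_deg x) n).+1.
rewrite -(geom_stable z Hd (n := N)) ?(geom_stable z Hx (n := N)) //; try lia.
by rewrite (geom_stable z Hx Hn).
Qed.

Lemma is_bilinear_conv_inv : is_bilinear conv_inv.
Proof.
split=> [x k z z'|z k v w].
  by rewrite /conv_inv; case: (is_bilinear_geom (filt_deg x).+1) => L _; rewrite L.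
have [m Hv] := filt_exists v; have [n Hw] := filt_exists w.
have Hv' : filt (maxn m n) v by apply: filt_le Hv _; lia.
have Hw' : filt (maxn m n) w by apply: filt_le Hw _; lia.
rewrite (conv_invE _ (filtZD k Hv' Hw') (ltnSn _)).
rewrite (conv_invE _ Hv' (ltnSn _)) (conv_invE _ Hw' (ltnSn _)).
by case: (is_bilinear_geom (maxn m n).+1) => _ L; rewrite L.
Qed.

Lemma conv_inv_vanishes n : vanishes_below n (fun x z => conv_inv x z - geom n x z).
Proof. by move=> k u Hu Hk z; rewrite (conv_invE z Hu Hk) subrr. Qed.

Lemma conv_gam_inv x z : conv gam conv_inv x z = cunit x z.
Proof.
have [k Hk] := filt_exists x.
have : conv gam (fun x z => conv_inv x z - geom k.+1 x z) x z = 0.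
  apply: (vanishes_below_conv (m := 0) (n := k.+1)) Hk _ z => //.
  - exact: is_bilinear_sub is_bilinear_conv_inv (is_bilinear_geom _).
  - exact: conv_inv_vanishes.
rewrite convBr //; [|exact: is_bilinear_conv_inv|exact: is_bilinear_geom].
by move/subr0_eq ->; rewrite conv_gam_geom (nu_pow_vanishes Hk) ?subr0.
Qed.

Lemma conv_inv_gam x z : conv conv_inv gam x z = cunit x z.
Proof.
have [k Hk] := filt_exists x.
have : conv (fun x z => conv_inv x z - geom k.+1 x z) gam x z = 0.
  apply: (vanishes_below_conv (m := k.+1) (n := 0)) Hk _ z => //.
  - exact: is_bilinear_sub is_bilinear_conv_inv (is_bilinear_geom _).
  - exact: conv_inv_vanishes.
  - by rewrite addn0.
rewrite convBl //; [|exact: is_bilinear_conv_inv|exact: is_bilinear_geom].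
by move/subr0_eq ->; rewrite conv_geom_gam (nu_pow_vanishes Hk) ?subr0.
Qed.

Lemma is_lmul_conv_inv : is_lmul gam -> is_lmul conv_inv.
Proof.
move=> Lg; have Lcunit : is_lmul cunit by move=> x w; rewrite /cunit -scalerAl mul1r.
have Lnu : is_lmul nu by move=> x w; rewrite /nu mulrBl -Lcunit -Lg.
have Lpow n : is_lmul (nu_pow n).
  elim: n => [//|n IH] /=; apply: is_lmul_conv => //.
  - exact: is_bilinear_nu.
  - exact: is_bilinear_nu_pow.
have Lgeom n : is_lmul (geom n).
  by elim: n => [|n IH] x w /=; [rewrite mul0r | rewrite IH Lpow mulrDl].
by move=> x w; rewrite /conv_inv Lgeom.
Qed.

End ConvolutionInverse.

Lemma antipode_exists : exists S : U -> U, is_linear S /\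
  forall x, cop U (fun a b => S a * b) x = eps x *: 1 /\
            cop U (fun a b => a * S b) x = eps x *: 1.
Proof.
pose lmul (x z : U) := x * z.
have Bmul : is_bilinear lmul := is_bilinear_mul U.
have lmul1 z : lmul 1 z = z by exact: mul1r.
exists (fun x => conv_inv lmul x 1); split.
  by move=> k u v; case: (is_bilinear_conv_inv Bmul lmul1) => _ L; rewrite L.
move=> x; split; last exact: (conv_gam_inv Bmul lmul1 x 1).
rewrite -[RHS](conv_inv_gam Bmul lmul1 x 1); apply: eq_cop => a b.
by rewrite /lmul mulr1 -is_lmul_conv_inv // => u w; rewrite /lmul mulr1.
Qed.

Lemma conv_invertible gam : is_bilinear gam -> (forall z, gam 1 z = z) ->
  exists2 delta, is_bilinear delta &
    forall x z, conv gam delta x z = cunit x z /\ conv delta gam x z = cunit x z.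
Proof.
move=> Gb gam1; exists (conv_inv gam); first exact: is_bilinear_conv_inv.
by move=> x z; split; [exact: conv_gam_inv | exact: conv_inv_gam].
Qed.

Lemma UEA_hopf : is_hopf cop eps.
Proof.
split=> //; split=> //; split=> //; split=> //; split=> //.
split; first by move=> W t x T; apply: coassoc.
split; first exact: counit_l.
split; first exact: counit_r.
exact: antipode_exists.
Qed.

End EnvelopingBialgebra.

Theorem corollary3p4 (K : fieldType) (h : lmodType K) (br trh : h -> h -> h)
  (U : algType K) (iota : h -> U) (cop : copT U) (eps : U -> K)
  (tr : U -> U -> U) :
  is_right_post_lie br trh ->
  is_UEA br iota ->
  (* the usual coproduct of U(h): the algebra morphism with iota x primitive *)
  cop_wf cop -> cop_alg_morph cop ->
  (forall (W : lmodType K) (beta : U -> U -> W) (x : h), is_bilinear beta ->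
     cop W beta (iota x) = beta (iota x) 1 + beta 1 (iota x)) ->
  (* the usual counit of U(h) *)
  is_linear (eps : U -> K^o) -> eps 1 = 1 ->
  (forall u v, eps (u * v) = eps u * eps v) ->
  (forall x, eps (iota x) = 0) ->
  is_UEA_extension trh iota cop eps tr ->
  is_right_post_hopf cop eps tr.
Proof.
(* The post-Lie axioms are only needed to build the extension [tr], which is given. *)
move=> _ HU Hwf Hmorph cop_iota epsL eps1 epsM eps_iota.
move=> [trB [_ [eps_tr [cop_tr [tr1 [_ [_ [trM trA]]]]]]]].
have gamB : is_bilinear (fun x z => tr z x) := is_bilinear_swap trB.
split; first exact: (UEA_hopf HU Hwf Hmorph cop_iota epsL eps1 epsM eps_iota).
do 5 (split; first done).
have [delta deltaB delta_inv] :=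
  conv_invertible HU Hwf Hmorph cop_iota epsL eps1 epsM eps_iota gamB tr1.
by exists delta.
Qed.
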